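(* Let $\mathcal F$ be a filtration sequence, $r=(r_m)_{m\in\mathbb N}$ an extended integer sequence, and $E=(E_{m,n})_{m,n\in\mathbb N}$ an $r$-asymptotic e-process for $\mathcal P$ and $\mathcal F$. Then for every $\alpha\in(0,1)$, $$\limsup_{m\to\infty}\sup_{P\in\mathcal P}P\Big[\sup_{n\in\mathbb N,\ n\le r_m}E_{m,n}\ge \tfrac1\alpha\Big]\le\alpha .$$
   Context: $(\Omega,\mathcal A)$ is a measurable space, $\mathcal P$ a set of probability measures on it, $\mathbb N=\{0,1,\dots\}$; extended integers are elements of $\mathbb N\cup\{\infty\}$. Nonnegative random variables take values in $[0,\infty]$ with $\mathbb E_P[X]:=\infty$ if not $P$-integrable; $X_\infty:=\limsup_nX_n$. A filtration sequence is a family $(\mathcal F_{m,n})_{m,n\in\mathbb N}$ of sub-$\sigma$-algebras with each $\mathcal F_{m,\bullet}$ a filtration; adapted means $E_{m,n}$ is $\mathcal F_{m,n}$-measurable. For a filtration $\mathcal G$ and $\rho\in\mathbb N\cup\{\infty\}$, $\mathcal T(\rho,\mathcal G,\mathcal P)$ is the set of $\mathcal G$-stopping times $\tau$ (values in $\mathbb N\cup\{\infty\}$) with $P[\tau\le\rho]=1$ for all $P\in\mathcal P$; $\mathcal T(r,\mathcal F,\mathcal P)$ is the set of sequences $(\tau_m)$ with $\tau_m\in\mathcal T(r_m,\mathcal F_{m,\bullet},\mathcal P)$. A nonnegative adapted $E$ is an $r$-asymptotic e-process if for every $\tau\in\mathcal T(r,\mathcal F,\mathcal P)$, $\limsup_m\sup_{P\in\mathcal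 P}\mathbb E_P[E_{m,\tau_m}]\le 1$. *)

From HB Require Import structures.
From mathcomp Require Import all_boot all_order all_algebra.
From mathcomp Require Import all_classical all_reals all_analysis measurable_realfun.
Set Implicit Arguments. Unset Strict Implicit. Unset Printing Implicit Defensive.
Import Order.TTheory GRing.Theory Num.Theory.
Local Open Scope classical_set_scope.
Local Open Scope ring_scope.
Local Open Scope ereal_scope.

(** Extended integers N ∪ {∞}: [Some n] = n, [None] = ∞. *)
Definition enat := option nat.

Definition enat_le (a b : enat) : bool :=
  match a, b with
  | _, None => true
  | None, Some _ => false
  | Some x, Some y => (x <= y)%N
  end.

Section Defs.
Context {d : measure_display} {T : measurableType d} {R : realType}.

Definition sub_sigma_algebra (G : set (set T)) : Prop :=
  sigma_algebra setT G /\ G `<=` measurable.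

Definition filtration (G : nat -> set (set T)) : Prop :=
  (forall n, sub_sigma_algebra (G n)) /\ (forall n, G n `<=` G n.+1).

Definition filtration_sequence (F : nat -> nat -> set (set T)) : Prop :=
  forall m, filtration (F m).

Definition measurable_wrt (G : set (set T)) (X : T -> \bar R) : Prop :=
  forall B : set (\bar R), measurable B -> G (X @^-1` B).

Definition adapted (F : nat -> nat -> set (set T)) (E : nat -> nat -> T -> \bar R)
  : Prop := forall m n, measurable_wrt (F m n) (E m n).

Definition nonneg_process (E : nat -> nat -> T -> \bar R) : Prop :=
  forall m n w, 0 <= E m n w.

Definition stopping_time (G : nat -> set (set T)) (tau : T -> enat) : Prop :=
  forall n, G n [set w | enat_le (tau w) (Some n)].

Definition bounded_stopping_times (rho : enat) (G : nat -> set (set T))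
  (Ps : set (probability T R)) : set (T -> enat) :=
  [set tau | stopping_time G tau /\
     forall P : probability T R, Ps P -> P [set w | enat_le (tau w) rho] = 1].

Definition stopped (E : nat -> nat -> T -> \bar R) (m : nat) (tau : T -> enat)
  (w : T) : \bar R :=
  match tau w with
  | Some n => E m n w
  | None => limn_esup (fun n => E m n w)
  end.

Definition expect (P : probability T R) (X : T -> \bar R) : \bar R :=
  \int[P]_w X w.

Definition asymptotic_e_process (Ps : set (probability T R))
  (F : nat -> nat -> set (set T)) (r : nat -> enat)
  (E : nat -> nat -> T -> \bar R) : Prop :=
  nonneg_process E /\ adapted F E /\
  forall tau : nat -> T -> enat,
    (forall m, bounded_stopping_times (r m) (F m) Ps (tau m)) ->
    limn_esup (fun m => ereal_sup [set expect P (stopped E m (tau m)) | P in Ps])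
      <= 1.

End Defs.

(* Markov's inequality at a stopping time.  Fix [0 < c < 1/alpha] and let [tau_m] be
   the first [n <= r_m] with [c < E_{m,n}], or [r_m] if there is none.  Then [tau_m]
   is a stopping time bounded by [r_m], and [c * 1{c < sup_{n <= r_m} E_{m,n}}] is
   pointwise below [E_{m,tau_m}], so
   [P[1/alpha <= sup_{n <= r_m} E_{m,n}] <= E_P[E_{m,tau_m}] / c].
   Taking [limsup_m sup_P] and then letting [c] tend to [1/alpha] gives the bound. *)

From HB Require Import structures.
From mathcomp Require Import all_boot all_order all_algebra.
From mathcomp Require Import all_classical all_reals all_analysis measurable_realfun.
Import Order.TTheory GRing.Theory Num.Theory.
Local Open Scope classical_set_scope.
Local Open Scope ring_scope.
Local Open Scope ereal_scope.

Lemma enat_le_refl a : enat_le a a.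
Proof. by case: a => //= x. Qed.

Lemma enat_le_trans a b c : enat_le a b -> enat_le b c -> enat_le a c.
Proof.
by case: a => [x|]; case: b => [y|]; case: c => [z|] //=; apply: leq_trans.
Qed.

Lemma limn_esup_le_scale (R : realType) (u v : (\bar R)^nat) (k : R) :
  (0 <= k)%R -> (forall m, u m <= k%:E * v m) ->
  limn_esup u <= k%:E * limn_esup v.
Proof.
move=> k0 uv; rewrite !limn_esup_lim.
have esups_le n : esups u n <= k%:E * esups v n.
  apply: ge_ereal_sup => _ [j /= jn <-].
  apply: (le_trans (uv j)); apply: lee_wpmul2l; first by rewrite lee_fin.
  by apply: ereal_sup_ubound; exists j.
rewrite -limeMl //; last exact: is_cvg_esups.
apply: lee_lim; first exact: is_cvg_esups.
  by apply: is_cvgeZl => //; exact: is_cvg_esups.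
exact: nearW.
Qed.

(* Unlike [ge0_le_integral], no measurability is required: the larger function
   dominates every simple function below the smaller one. *)
Lemma ge0_le_integral_nomeas d (T : measurableType d) (R : realType)
  (mu : {measure set T -> \bar R}) (f g : T -> \bar R) :
  (forall x, 0 <= f x) -> (forall x, f x <= g x) ->
  \int[mu]_x f x <= \int[mu]_x g x.
Proof.
move=> f0 fg.
rewrite !ge0_integralE //; last by move=> x _; exact: le_trans (f0 x) (fg x).
apply: ereal_sup_le => _ [h hf <-]; exists h => //= x.
by apply: le_trans (hf x) _; rewrite /patch; case: ifP.
Qed.

Section filtration.
Context {d : measure_display} {T : measurableType d}.

Lemma filtration_le {G : nat -> set (set T)} {k n : nat} :
  filtration G -> (k <= n)%N -> G k `<=` G n.
Proof.
move=> [_ GS]; elim: n => [|n IH]; first by rewrite leqn0 => /eqP ->.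
rewrite leq_eqVlt => /orP [/eqP -> //|].
by rewrite ltnS => /IH kn A /kn /GS.
Qed.

Lemma adapted_measurable {R : realType} F (E : nat -> nat -> T -> \bar R) m n :
  filtration_sequence F -> adapted F E -> measurable_fun setT (E m n).
Proof.
move=> hF hE _ B mB; rewrite setTI; apply: ((hF m).1 n).2; exact: hE.
Qed.

End filtration.

Section hitting_time.
Context {d : measure_display} {T : measurableType d} {R : realType}.
Variables (F : nat -> nat -> set (set T)) (r : nat -> enat).
Variables (E : nat -> nat -> T -> \bar R) (c : R).

Definition running_sup m w : \bar R :=
  ereal_sup [set E m n w | n in [set n | enat_le (Some n) (r m)]].

Definition exceeds m w n : bool := (c%:E < E m n w) && enat_le (Some n) (r m).

Definition hitting_time m w : enat :=
  match pselect (exists n, exceeds m w n) with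
  | left H => Some (ex_minn H)
  | right _ => r m
  end.

Lemma hitting_time_le m w : enat_le (hitting_time m w) (r m).
Proof.
rewrite /hitting_time; case: pselect => [H|_]; last exact: enat_le_refl.
by case: ex_minnP => j /andP[].
Qed.

Lemma exceeds_running_sup m w : c%:E < running_sup m w -> exists n, exceeds m w n.
Proof. by move=> /ereal_sup_gt [_ [n nr <-] cE]; exists n; apply/andP. Qed.

Hypothesis hF : filtration_sequence F.
Hypothesis hE : adapted F E.

Lemma measurable_running_sup m : measurable_fun setT (running_sup m).
Proof.
pose g k := E m (if r m is Some N then minn k N else k).
suff -> : running_sup m = fun w => esups (g^~ w) 0%N.
  by apply: measurable_fun_esups => k; exact: adapted_measurable.
apply/funext => w; rewrite /running_sup /esups /sdrop /=; congr ereal_sup.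
apply/seteqP; split => _ [n nr <-]; case rm: (r m) nr => [N|] /= nr.
- by exists n => //; rewrite /g rm (minn_idPl nr).
- by exists n => //; rewrite /g rm.
- by exists (minn n N); rewrite ?rm /= ?geq_minr // /g rm.
- by exists n; rewrite ?rm // /g rm.
Qed.

Lemma measurable_exceeds m k n : (k <= n)%N -> F m n [set w | exceeds m w k].
Proof.
move=> kn; rewrite (_ : [set w | _] = if enat_le (Some k) (r m)
    then E m k @^-1` `]c%:E, +oo[ else set0).
  case: ifP => _; last by case: ((hF m).1 n) => [[]].
  apply: (filtration_le (hF m) kn); apply: hE; exact: emeasurable_itv.
apply/seteqP; split => w.
  by case/andP => cE ->; rewrite /= in_itv /= cE.
by case: ifP => // kr; rewrite /= in_itv /= andbT => cE; apply/andP.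
Qed.

(* [{tau <= n}] is the union of [{exceeds k}] for [k <= n], together with the
   deterministic event [{r_m <= n}]. *)
Lemma hitting_time_stopping_time m : stopping_time (F m) (hitting_time m).
Proof.
move=> n; have [[F0 FC FU] _] := (hF m).1 n.
pose Hk k := if (k <= n)%N then [set w | exceeds m w k]
             else [set w | enat_le (r m) (Some n)].
suff -> : [set w | enat_le (hitting_time m w) (Some n)] = \bigcup_k Hk k.
  apply: FU => k; rewrite /Hk; case: ifPn => [kn|_]; first exact: measurable_exceeds.
  case: (enat_le (r m) (Some n)).
    by rewrite (_ : [set _ | true] = setT); [rewrite -(setD0 setT); exact: FC|apply/seteqP].
  by rewrite (_ : [set _ | false] = set0); [exact: F0|apply/seteqP; split].
apply/seteqP; split => w /=; rewrite /hitting_time.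
  case: pselect => [H|_ rn]; last by exists n.+1; rewrite /Hk //= ltnn.
  by case: ex_minnP => j hj _ /= jn; exists j; rewrite /Hk //= jn.
move=> [k _]; rewrite /Hk; case: pselect => [H|nH]; case: ifPn => kn //.
- by move=> hk; case: ex_minnP => j _ /(_ k hk) jk; exact: leq_trans jk kn.
- by move=> rn; case: ex_minnP => j /andP[_ jr] _; exact: enat_le_trans jr rn.
- by move=> hk; exfalso; apply: nH; exists k.
Qed.

Lemma hitting_time_bounded (Ps : set (probability T R)) m :
  bounded_stopping_times (r m) (F m) Ps (hitting_time m).
Proof.
split; first exact: hitting_time_stopping_time.
move=> P _; rewrite [X in P X](_ : _ = setT) ?probability_setT //.
by apply/seteqP; split => // w _; exact: hitting_time_le.
Qed.

Hypothesis E0 : nonneg_process E.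

Lemma indic_le_stopped_hitting_time m w :
  (c * \1_[set x | (c%:E < running_sup m x)%E] w)%:E <= stopped E m (hitting_time m) w.
Proof.
rewrite /stopped /hitting_time indicE; case: pselect => [H|nH].
  case: ex_minnP => j /andP[cE _] _.
  by case: (_ \in _); rewrite /= ?mulr1 ?mulr0 //; exact: ltW.
case: (boolP (w \in _)) => [/set_mem /exceeds_running_sup //|_].
rewrite mulr0; case: (r m) => [N|]; first exact: E0.
by apply: limf_esup_ge0 => // n; exact: E0.
Qed.

Lemma measurable_running_sup_gt a m : measurable [set w | a < running_sup m w].
Proof.
rewrite (_ : [set w | _] = setT `&` (running_sup m @^-1` `]a, +oo[)).
  by apply: measurable_running_sup => //; exact: emeasurable_itv.
by apply/seteqP; split => w /=; rewrite in_itv /= andbT; [split|case].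
Qed.

Lemma measurable_running_sup_ge a m : measurable [set w | a <= running_sup m w].
Proof.
rewrite (_ : [set w | _] = setT `&` (running_sup m @^-1` `[a, +oo[)).
  by apply: measurable_running_sup => //; exact: emeasurable_itv.
by apply/seteqP; split => w /=; rewrite in_itv /= andbT; [split|case].
Qed.

Hypothesis c_gt0 : (0 < c)%R.

Lemma markov_hitting_time (P : probability T R) m :
  c%:E * P [set w | c%:E < running_sup m w] <= expect P (stopped E m (hitting_time m)).
Proof.
set S := [set w | c%:E < running_sup m w].
have -> : c%:E * P S = \int[P]_w (c * \1_S w)%:E.
  have mS : measurable S by exact: measurable_running_sup_gt.
  rewrite (integralZl_indic _ (fun _ => S)) //= ?integral_indic ?setIT //.
  by rewrite ltNge ltW.
apply: ge0_le_integral_nomeas; last exact: indic_le_stopped_hitting_time.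
by move=> w; rewrite lee_fin mulr_ge0 ?(ltW c_gt0) // indicE; case: (_ \in _).
Qed.

Lemma tail_le_hitting_time (P : probability T R) m a : c%:E < a ->
  P [set w | a <= running_sup m w] <=
    (c^-1)%:E * expect P (stopped E m (hitting_time m)).
Proof.
move=> ca; rewrite -(@lee_pmul2l _ c%:E) ?lte_fin //.
rewrite muleA -EFinM mulfV ?gt_eqF // mul1e.
apply: le_trans (markov_hitting_time P m); rewrite lee_pmul2l ?lte_fin //.
apply: le_measure; rewrite ?inE.
- exact: measurable_running_sup_ge.
- exact: measurable_running_sup_gt.
- by move=> w /=; exact: lt_le_trans.
Qed.

End hitting_time.

Theorem mainTheorem9 (d : measure_display) (T : measurableType d) (R : realType)
  (Ps : set (probability T R)) (F : nat -> nat -> set (set T))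
  (r : nat -> enat) (E : nat -> nat -> T -> \bar R)
  (hF : filtration_sequence F)
  (hE : asymptotic_e_process Ps F r E)
  (alpha : R) (ha0 : (0 < alpha)%R) (ha1 : (alpha < 1)%R) :
  limn_esup (fun m =>
    ereal_sup [set P [set w | (alpha^-1)%:E <=
                 ereal_sup [set E m n w | n in [set n | enat_le (Some n) (r m)]]]
              | P in Ps])
  <= alpha%:E.
Proof.
have [E0 [adaptedE eE]] := hE.
apply/lee_addgt0Pr => e e0.
have ae0 : (0 < alpha + e)%R by rewrite addr_gt0.
pose c := ((alpha + e)^-1)%R.
have c0 : (0 < c)%R by rewrite invr_gt0.
have c_lt : c%:E < (alpha^-1)%:E by rewrite lte_fin ltf_pV2 ?posrE // ltrDl.
pose tau := hitting_time r E c.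
apply: le_trans (@limn_esup_le_scale _ _
  (fun m => ereal_sup [set expect P (stopped E m (tau m)) | P in Ps]) _ (ltW ae0) _) _.
  move=> m; apply: ge_ereal_sup => _ [P PP <-].
  apply: le_trans (tail_le_hitting_time _ _ _ _ hF adaptedE E0 c0 P m _ c_lt) _.
  rewrite invrK lee_wpmul2l ?lee_fin ?(ltW ae0) //.
  by apply: ereal_sup_ubound; exists P.
have tau_bounded m : bounded_stopping_times (r m) (F m) Ps (tau m).
  exact: hitting_time_bounded.
by rewrite -EFinD -[leRHS]mule1 lee_wpmul2l ?lee_fin ?(ltW ae0) ?eE.
Qed.
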